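(* Let $n\in\mathbb{N}$, let $p$ be a prime with $p\nmid n$, and let $q\ge1$ be an integer. Then \[ \frac{M_q(pn)}{\tau(pn)}\le\frac{M_q(n)}{\tau(n)}+\frac{1}{\tau(n)}\sum_{\substack{a+b=q\\ 1\le b\le q/2}}\binom{q}{a}\int_{\mathbb{R}}\Delta(n;u)^a\,\Delta(n;u-\log p)^b\,du, \] where the sum runs over integers $a,b$. Moreover, $M_q(pn)/\tau(pn)\ge M_q(n)/\tau(n)$.
   Context: For $n\in\mathbb{N}$ and $u\in\mathbb{R}$, $\Delta(n;u)=\#\{d\mid n: e^u<d\le e^{u+1}\}$; $M_q(n)=\int_{\mathbb{R}}\Delta(n;u)^q\,du$; $\tau(n)$ is the number of divisors of $n$. *)

From HB Require Import structures.
From mathcomp Require Import all_boot all_order all_algebra.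
From mathcomp Require Import all_classical all_reals all_analysis.
Set Implicit Arguments. Unset Strict Implicit. Unset Printing Implicit Defensive.
Import Order.TTheory GRing.Theory Num.Theory.
Local Open Scope ring_scope.

Definition Delta (R : realType) (n : nat) (u : R) : nat :=
  size [seq d <- divisors n | (expR u < d%:R) && (d%:R <= expR (u + 1))].

Definition tau (n : nat) : nat := size (divisors n).

Definition Mq (R : realType) (q n : nat) : \bar R :=
  (\int[@lebesgue_measure R]_(u in [set: R]) ((Delta n u)%:R ^+ q : R)%:E)%E.

From HB Require Import structures.
From mathcomp Require Import all_boot all_order all_algebra.
From mathcomp Require Import all_classical all_reals all_analysis.
From mathcomp Require Import ring lra zify measurable_realfun.
Set Implicit Arguments. Unset Strict Implicit. Unset Printing Implicit Defensive.
Import Order.TTheory GRing.Theory Num.Theory.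
Local Open Scope ring_scope.

(* Let L = ln p.  Since p is a prime not dividing n, the divisors
   of pn are those of n together with their p-multiples, so
   Delta(pn;u) = Delta(n;u) + Delta(n;u-L) and tau(pn) = 2 tau(n).  Expanding
   the q-th power binomially gives M_q(pn) = sum_k C(q,k) J(q-k,k), where
   J(a,b) = \int Delta(n;u)^a Delta(n;u-L)^b du is a mixed moment.
   The involution d |-> n/d of the divisors of n shows that
   Delta(n; ln n - 1 - v) = Delta(n; v) for all v off a finite set, and the
   reflection u |-> ln n - 1 + L - u, which preserves Lebesgue measure, then
   yields the symmetry J(a,b) = J(b,a).  The terms T_k = C(q,k) J(q-k,k) are
   therefore nonnegative and symmetric under k |-> q - k, so
   2 T_0 <= sum_k T_k <= 2 (T_0 + sum_{1 <= b <= q/2} T_b); dividing by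
   tau(pn) = 2 tau(n) and noting T_0 = M_q(n) gives both inequalities. *)

Section Divisors.
Local Open Scope nat_scope.

Lemma divisors_mul_prime p n : 0 < n -> prime p -> ~~ (p %| n) ->
  perm_eq (divisors (p * n)) (divisors n ++ map (muln p) (divisors n)).
Proof.
move=> n_gt0 p_pr p_n.
have p_gt0 : 0 < p by apply: prime_gt0.
have pn_gt0 : 0 < p * n by rewrite muln_gt0 p_gt0.
apply: uniq_perm.
- exact: divisors_uniq.
- rewrite cat_uniq divisors_uniq /=; apply/andP; split.
    apply/hasPn => x /mapP [e]; rewrite -dvdn_divisors // => e_n ->.
    rewrite -dvdn_divisors //; apply: contra p_n => pe_n.
    by apply: dvdn_trans pe_n; apply: dvdn_mulr.
  rewrite map_inj_in_uniq ?divisors_uniq // => x y _ _ /eqP.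
  by rewrite eqn_pmul2l // => /eqP.
- move=> d; rewrite mem_cat -!dvdn_divisors //; apply/idP/idP => [d_pn|].
    have [p_d|p_nd] := boolP (p %| d).
      apply/orP; right; apply/mapP; exists (d %/ p); last by rewrite mulnC divnK.
      by rewrite -dvdn_divisors // -(dvdn_pmul2l p_gt0) [p * _]mulnC divnK.
    have d_cop : coprime d p by rewrite coprime_sym prime_coprime.
    by rewrite -(Gauss_dvdl n d_cop) mulnC d_pn.
  case/orP => [/dvdn_mull-> //|/mapP [e]].
  by rewrite -dvdn_divisors // => e_n ->; rewrite dvdn_pmul2l.
Qed.

Lemma divisors_complement n : 0 < n ->
  perm_eq (divisors n) (map (fun d => n %/ d) (divisors n)).
Proof.
move=> n_gt0.
have divK d : d %| n -> n %/ (n %/ d) = d by move=> d_n; rewrite divnA // mulKn.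
apply: uniq_perm.
- exact: divisors_uniq.
- rewrite map_inj_in_uniq ?divisors_uniq // => x y.
  rewrite -!(dvdn_divisors _ n_gt0) => x_n y_n eq_xy.
  by rewrite -(divK x x_n) -[y](divK y y_n) eq_xy.
- move=> d; apply/idP/idP; last first.
    by case/mapP => e; rewrite -!dvdn_divisors // => e_n ->; apply: dvdn_div.
  rewrite -dvdn_divisors // => d_n; apply/mapP; exists (n %/ d).
    by rewrite -dvdn_divisors // dvdn_div.
  by rewrite divK.
Qed.

End Divisors.

Section DivisorCounting.
Context {R : realType}.

Definition in_window (u : R) (d : nat) : bool :=
  (expR u < d%:R) && (d%:R <= expR (u + 1)).

Lemma DeltaE n u : Delta n u = count (in_window u) (divisors n).
Proof. by rewrite /Delta size_filter. Qed.

Lemma Delta_mul_prime n p (u : R) : (0 < n)%N -> prime p -> ~~ (p %| n)%N ->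
  Delta (p * n) u = (Delta n u + Delta n (u - ln (p%:R : R)))%N.
Proof.
move=> n_gt0 p_pr p_n.
rewrite !DeltaE (permP (divisors_mul_prime n_gt0 p_pr p_n)) count_cat count_map.
congr addn; apply: eq_count => d /=.
have p_gt0 : (0 : R) < p%:R by rewrite ltr0n prime_gt0.
rewrite /in_window (_ : u - ln p%:R + 1 = (u + 1) - ln p%:R); last by rewrite addrAC.
by rewrite !expRB lnK ?posrE // natrM ltr_pdivrMr // ler_pdivlMr // [d%:R * _]mulrC.
Qed.

Lemma tau_mul_prime n p : (0 < n)%N -> prime p -> ~~ (p %| n)%N ->
  tau (p * n) = (2 * tau n)%N.
Proof.
move=> n_gt0 p_pr p_n.
by rewrite /tau (perm_size (divisors_mul_prime n_gt0 p_pr p_n)) size_cat size_map addnn mul2n.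
Qed.

Lemma tau_gt0 n : (0 < tau n)%N.
Proof. by rewrite /tau lt0n size_eq0; apply/eqP => h; move: (divisor1 n); rewrite h. Qed.

(* The finitely many v for which an endpoint of (e^v, e^(v+1)] is a divisor. *)
Definition window_edges n : seq R :=
  [seq ln (d%:R : R) | d <- divisors n] ++ [seq ln (d%:R : R) - 1 | d <- divisors n].

(* Off the window edges, Delta(n;.) is symmetric about (ln n - 1)/2: the map
   d |-> n/d turns the window (e^v, e^(v+1)] into [e^w, e^(w+1)) with
   w = ln n - 1 - v, and no divisor sits on an endpoint. *)
Lemma Delta_reflect n (v : R) : (0 < n)%N -> v \notin window_edges n ->
  Delta n (ln (n%:R : R) - 1 - v) = Delta n v.
Proof.
move=> n_gt0 v_edge.
rewrite !DeltaE (permP (divisors_complement n_gt0)) count_map.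
apply: eq_in_count => d d_div /=.
have not_edge : expR v != d%:R /\ expR (v + 1) != d%:R.
  split; apply/eqP => e; move/negP: v_edge; apply; rewrite mem_cat;
    apply/orP; [left|right]; apply/mapP; exists d => //; rewrite -e expRK; lra.
move: d_div; rewrite -dvdn_divisors // => d_n.
have d_gt0 : (0 < d)%N by apply: dvdn_gt0 d_n.
have dR : (0 : R) < d%:R by rewrite ltr0n.
have nR : (0 : R) < n%:R by rewrite ltr0n.
rewrite /in_window natr_div // ?unitfE ?gt_eqF //.
rewrite (_ : ln n%:R - 1 - v = ln n%:R - (v + 1)); last by lra.
rewrite (_ : ln n%:R - (v + 1) + 1 = ln n%:R - v); last by lra.
rewrite !expRB lnK ?posrE // ltr_pM2l // ler_pM2l //.
rewrite ltf_pV2 ?posrE ?expR_gt0 // lef_pV2 ?posrE ?expR_gt0 //.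
by rewrite andbC [d%:R < _]lt_neqAle [expR v < _]lt_neqAle eq_sym (proj1 not_edge) (proj2 not_edge).
Qed.

(* u |-> Delta(n;u) is a finite sum of indicators of Borel sets. *)
Lemma measurable_Delta n : measurable_fun setT (fun u : R => (Delta n u)%:R : R).
Proof.
have -> : (fun u : R => (Delta n u)%:R : R) =
    (fun u => \sum_(d <- divisors n) (if in_window u d then 1 else 0 : R)).
  apply/funext => u; rewrite DeltaE -sum1_count natr_sum big_mkcond /=.
  by apply: eq_bigr => d _; case: ifP.
apply: measurable_sum => d; apply: measurable_fun_if => //.
apply: measurable_and.
- by apply: measurable_fun_ltr => //; exact: measurable_expR.
- apply: measurable_fun_ler => //; apply: measurableT_comp; first exact: measurable_expR.
  exact: measurable_funD.
Qed.

End DivisorCounting.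

Section Reflection.
Context {R : realType}.
Local Notation mu := (@lebesgue_measure R).
Local Open Scope classical_set_scope.

Lemma measurable_reflect (c : R) : measurable_fun setT (fun x : R => c - x).
Proof. exact: measurable_funB. Qed.

(* Lebesgue measure is invariant under the reflection x |-> c - x: both
   measures agree on half-open intervals, which determine Lebesgue measure. *)
Lemma lebesgue_reflect (c : R) (A : set R) : measurable A ->
  pushforward mu ((fun x : R => c - x) : _ -> measurableTypeR R) A = mu A.
Proof.
move=> mA; apply/esym/lebesgue_measure_unique => //; first exact: measurable_reflect.
move=> mf _ [[a b]] _ <-; rewrite /= /pushforward /=.
have -> : (fun x : R => c - x) @^-1` `]a, b] = `[c - b, c - a[%classic.
  by apply/seteqP; split => x /=; rewrite !in_itv /= => /andP[? ?]; apply/andP; split; lra.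
rewrite !lebesgue_measure_itv /= !lte_fin ltrD2l ltrN2.
by case: ifP => // _; rewrite -!EFinD; congr EFin; lra.
Qed.

Lemma integral_reflect (c : R) (f : R -> \bar R) :
  measurable_fun setT f -> (forall x, (0 <= f x)%E) ->
  (\int[mu]_(x in setT) f x = \int[mu]_(x in setT) f (c - x)%R)%E.
Proof.
move=> mf f_ge0.
have := @ge0_integral_pushforward _ _ (measurableTypeR R) (measurableTypeR R) R
  (fun x => c - x) (measurable_reflect c) mu setT f measurableT mf (fun x _ => f_ge0 x).
rewrite preimage_setT => <-.
apply: eq_measure_integral => [|_ A mA _ /=]; first exact: measurable_reflect.
by rewrite lebesgue_reflect.
Qed.

Lemma ae_eq_off_seq (s : seq R) (f g : R -> \bar R) :
  (forall x, x \notin s -> f x = g x) -> ae_eq mu setT f g.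
Proof.
have s_count : countable [set` s] by apply: finite_set_countable; exact: finite_seq.
move=> fg; exists [set` s]; split.
- by apply: countable_measurable => // x; exact: measurable_set1.
- exact: countable_lebesgue_measure0.
- by move=> x /= not_fg; apply/negPn/negP => x_s; apply: not_fg => _; exact: fg.
Qed.

End Reflection.

Section MixedMoments.
Context {R : realType}.
Local Notation mu := (@lebesgue_measure R).
Variables (n : nat) (L : R).

Definition mixed (a b : nat) (u : R) : R :=
  (Delta n u)%:R ^+ a * (Delta n (u - L))%:R ^+ b.

Definition mixed_moment (a b : nat) : \bar R :=
  (\int[mu]_(u in setT) (mixed a b u)%:E)%E.

Lemma mixed_ge0 a b u : 0 <= mixed a b u.
Proof. by rewrite /mixed mulr_ge0 // exprn_ge0. Qed.

Lemma measurable_mixed a b : measurable_fun setT (fun u => (mixed a b u)%:E).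
Proof.
apply/measurable_EFinP; apply: measurable_funM; apply: measurable_funX.
  exact: measurable_Delta.
by apply: (measurableT_comp (measurable_Delta n)); exact: measurable_funD.
Qed.

Lemma mixed_moment_ge0 a b : (0 <= mixed_moment a b)%E.
Proof. by apply: integral_ge0 => u _; rewrite lee_fin mixed_ge0. Qed.

(* J(a,b) = J(b,a): under u |-> ln n - 1 + L - u the two factors of the
   integrand are exchanged, except on a finite set of window edges. *)
Lemma mixed_moment_sym a b : (0 < n)%N -> mixed_moment a b = mixed_moment b a.
Proof.
move=> n_gt0; rewrite /mixed_moment (integral_reflect (ln (n%:R : R) - 1 + L)); last 2 first.
- exact: measurable_mixed.
- by move=> u; rewrite lee_fin mixed_ge0.
apply: ae_eq_integral => //.
- by apply: (measurableT_comp (measurable_mixed a b)); exact: measurable_reflect.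
- exact: measurable_mixed.
apply: (@ae_eq_off_seq _ (window_edges n ++ [seq x + L | x <- window_edges n])) => u.
rewrite mem_cat negb_or => /andP[u_edge uL_edge].
have {}uL_edge : u - L \notin window_edges n.
  by apply: contra uL_edge => uL; apply/mapP; exists (u - L); rewrite ?subrK.
rewrite /mixed mulrC; congr (_%:E); congr (_ * _); congr (_%:R ^+ _).
  by rewrite -(Delta_reflect n_gt0 u_edge); congr Delta; lra.
by rewrite -(Delta_reflect n_gt0 uL_edge); congr Delta; lra.
Qed.

End MixedMoments.

Section BinomialExpansion.
Context {R : realType}.
Local Notation mu := (@lebesgue_measure R).

Definition binom_term n (L : R) q k : \bar R :=
  ((('C(q, k))%:R : R)%:E * mixed_moment n L (q - k) k)%E.

Lemma binom_term_ge0 n L q k : (0 <= binom_term n L q k)%E.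
Proof. by rewrite /binom_term mule_ge0 ?lee_fin ?ler0n ?mixed_moment_ge0. Qed.

Lemma binom_term_sym n L q k : (0 < n)%N -> (k <= q)%N ->
  binom_term n L q k = binom_term n L q (q - k).
Proof.
by move=> n_gt0 kq; rewrite /binom_term bin_sub // subKn // mixed_moment_sym.
Qed.

Lemma Mq_binom_term0 n L q : Mq R q n = binom_term n L q 0.
Proof.
rewrite /binom_term bin0 mul1e subn0 /mixed_moment /Mq.
by apply: eq_integral => u _; rewrite /mixed expr0 mulr1.
Qed.

(* M_q(pn) = sum_k C(q,k) J(q-k,k), from Delta(pn;u) = Delta(n;u) + Delta(n;u-ln p). *)
Lemma Mq_mul_prime n p q : (0 < n)%N -> prime p -> ~~ (p %| n)%N ->
  Mq R q (p * n) = (\sum_(0 <= k < q.+1) binom_term n (ln (p%:R : R)) q k)%E.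
Proof.
move=> n_gt0 p_pr p_n; set L := ln (p%:R : R).
transitivity (\int[mu]_(u in setT)
    (\sum_(0 <= k < q.+1) (('C(q, k)%:R : R) * mixed n L (q - k) k u)%:E))%E.
  apply: eq_integral => u _; rewrite Delta_mul_prime // natrD exprDn sumEFin big_mkord.
  by congr EFin; apply: eq_bigr => k _; rewrite -mulr_natl.
rewrite ge0_integral_sum //; last 2 first.
- move=> k; apply/measurable_EFinP; apply: measurable_funM; first exact: measurable_cst.
  by apply/measurable_EFinP; exact: measurable_mixed.
- by move=> k u _; rewrite lee_fin mulr_ge0 ?mixed_ge0.
apply: eq_bigr => k _; under eq_integral do rewrite EFinM.
rewrite ge0_integralZl_EFin //; first by move=> u _; rewrite lee_fin mixed_ge0.
exact: measurable_mixed.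
Qed.

End BinomialExpansion.

Section SymmetricSums.
Context {R : realDomainType}.
Local Open Scope ereal_scope.
Variables (T : nat -> \bar R) (q : nat).
Hypothesis T_ge0 : forall k, 0 <= T k.
Hypothesis T_sym : forall k, (k <= q)%N -> T k = T (q - k)%N.

(* A nonnegative sequence symmetric on [0, q] sums to at most twice its
   first half: each index k is matched with whichever of k, q - k is <= q/2. *)
Lemma sum_sym_le_twice_half :
  \sum_(0 <= k < q.+1) T k <=
    \sum_(0 <= k < (q./2).+1) T k + \sum_(0 <= k < (q./2).+1) T k.
Proof.
pose G k := if (k <= q./2)%N then T k else 0.
have sumG : \sum_(0 <= k < q.+1) G k = \sum_(0 <= k < (q./2).+1) T k.
  rewrite (@big_cat_nat _ _ _ (q./2).+1) //=; last by have := odd_double_half q; lia.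
  rewrite [X in _ + X](_ : _ = 0) ?adde0.
    by apply: eq_big_nat => k /andP[_ hk]; rewrite /G -ltnS hk.
  by rewrite big_nat_cond big1 // => k /andP[/andP[hk _] _]; rewrite /G leqNgt hk.
have sumG_rev : \sum_(0 <= k < q.+1) G (q - k)%N = \sum_(0 <= k < q.+1) G k.
  by rewrite [RHS]big_nat_rev; apply: eq_big_nat => k _; rewrite add0n subSS.
apply: (@le_trans _ _ (\sum_(0 <= k < q.+1) (G k + G (q - k)%N))); last first.
  by rewrite big_split /= sumG_rev sumG.
rewrite big_nat_cond [X in _ <= X]big_nat_cond; apply: lee_sum => k /andP[/andP[_ kq] _].
rewrite /G; case: ifP => k_half; first by apply: leeDl; case: ifP.
have -> : (q - k <= q./2)%N by move: k_half kq; have := odd_double_half q; lia.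
by rewrite add0e T_sym.
Qed.

(* The two end terms T 0 = T q already contribute 2 T 0 to the sum. *)
Lemma sum_sym_ge_ends : (1 <= q)%N -> T 0%N + T 0%N <= \sum_(0 <= k < q.+1) T k.
Proof.
move=> q_ge1; have Tq : T q = T 0%N by rewrite T_sym // subnn.
rewrite big_nat_recr //= big_ltn //= Tq leeD2r //.
by apply: leeDl; exact: sume_ge0.
Qed.

End SymmetricSums.

Lemma halve_double (R : realFieldType) (x : \bar R) (t : R) : 0 < t -> (0 <= x)%E ->
  ((x + x) * ((2%:R * t)^-1)%:E = x * (t^-1)%:E)%E.
Proof.
move=> t_gt0 x_ge0.
have halves : (((2%:R * t)^-1)%:E + ((2%:R * t)^-1)%:E = (t^-1)%:E :> \bar R)%E.
  by rewrite -EFinD; congr EFin; field; rewrite gt_eqF.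
have half_ge0 : (0 <= ((2%:R * t)^-1)%:E :> \bar R)%E.
  by rewrite lee_fin invr_ge0 mulr_ge0 // ltW.
by rewrite ge0_muleDl // -ge0_muleDr // halves.
Qed.

Theorem mainTheorem10 (R : realType) (n p q : nat) :
  (0 < n)%N -> prime p -> ~~ (p %| n)%N -> (1 <= q)%N ->
  ((Mq R q (p * n) * ((tau (p * n))%:R^-1 : R)%:E
      <= Mq R q n * ((tau n)%:R^-1 : R)%:E
         + ((tau n)%:R^-1 : R)%:E *
           \sum_(1 <= b < (q./2).+1)
             (('C(q, q - b))%:R : R)%:E *
             \int[@lebesgue_measure R]_(u in [set: R])
               (((Delta n u)%:R ^+ (q - b) *
                 (Delta n (u - ln (p%:R : R)))%:R ^+ b : R)%:E))
   /\
   Mq R q n * ((tau n)%:R^-1 : R)%:E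
      <= Mq R q (p * n) * ((tau (p * n))%:R^-1 : R)%:E)%E.
Proof.
move=> n_gt0 p_pr p_n q_ge1.
set L := ln (p%:R : R); pose T := binom_term n L q.
have T_sym k : (k <= q)%N -> T k = T (q - k)%N by apply: binom_term_sym.
have T0_ge0 : (0 <= T 0%N)%E by apply: binom_term_ge0.
have half_terms : (\sum_(1 <= b < (q./2).+1) (('C(q, q - b))%:R : R)%:E *
    \int[@lebesgue_measure R]_(u in [set: R])
      (((Delta n u)%:R ^+ (q - b) * (Delta n (u - L))%:R ^+ b : R)%:E) =
    \sum_(1 <= b < (q./2).+1) T b)%E.
  apply: eq_big_nat => b /andP[_ b_half]; rewrite /T /binom_term bin_sub //.
  by move: b_half; have := odd_double_half q; lia.
have t_gt0 : (0 : R) < (tau n)%:R by rewrite ltr0n tau_gt0.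
have scale_ge0 : (0 <= ((2%:R * (tau n)%:R)^-1 : R)%:E)%E.
  by rewrite lee_fin invr_ge0 mulr_ge0 // ltW.
rewrite tau_mul_prime // natrM Mq_mul_prime // (Mq_binom_term0 n L) half_terms.
split.
- apply: le_trans (lee_wpmul2r scale_ge0
    (sum_sym_le_twice_half (@binom_term_ge0 _ n L q) T_sym)) _.
  have S_ge0 : (0 <= \sum_(1 <= b < (q./2).+1) T b)%E.
    by apply: sume_ge0 => b _; exact: binom_term_ge0.
  by rewrite big_ltn // halve_double ?adde_ge0 // ge0_muleDl // [X in (_ + X)%E]muleC.
- rewrite -(halve_double t_gt0 T0_ge0); apply: lee_wpmul2r => //.
  exact: (sum_sym_ge_ends (@binom_term_ge0 _ n L q) T_sym q_ge1).
Qed.
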